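(* Let $\zeta>1$. If a distribution $\mu$ over $\{-1,+1\}^n$ is completely $\zeta$-marginally stable, then for every integer $k\ge1$, the $k$-transformed distribution $\mu_k=\mathrm{Rd}(\mu,k)$ is $2\zeta$-marginally stable.
   Context: For a distribution $\nu$ on $\{-1,+1\}^N$: $\Omega(\nu)$ support, $\nu_\Lambda$ marginal, $\nu^\sigma$ conditional given $\sigma\in\Omega(\nu_\Lambda)$. $\nu$ is $\zeta$-marginally stable if for every $i\in N$, every $S\subseteq\Lambda\subseteq N\setminus\{i\}$, and every $\sigma\in\Omega(\nu_\Lambda)$, $R_i^\sigma\le\zeta$ and $R_i^\sigma\le\zeta R_i^{\sigma_S}$, where $R_i^\sigma=\nu_i^\sigma(+1)/\nu_i^\sigma(-1)$. $\mu$ is completely $\zeta$-marginally stable if $(\boldsymbol\lambda*\mu)$ is $\zeta$-marginally stable for all $\boldsymbol\lambda\in(0,1]^n$, where $(\boldsymbol\lambda*\mu)(\sigma)\propto\mu(\sigma)\prod_{i:\sigma_i=+1}\lambda_i$. $k$-transformation: $\mathrm{Rd}(\mu,k)$ is the law of $Y\in\{-1,+1\}^{[n]\times[k]}$ obtained from $X\sim\mu$: if $X_i=-1$, $Y_{(i,j)}=-1$ for all $j$; if $X_i=+1$, $Y_{(i,j^* )}=+1$ and $Y_{(i,j)}=-1$ for $j\ne j^*$, with $j^*$ uniform in $[k]$ independently. *)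

From HB Require Import structures.
From mathcomp Require Import all_boot all_order all_algebra.
From mathcomp Require Import constructive_ereal.
Set Implicit Arguments. Unset Strict Implicit. Unset Printing Implicit Defensive.
Import Order.TTheory GRing.Theory Num.Theory.
Local Open Scope ring_scope.

(* Spins: true = +1, false = -1.  A configuration on the finite index set I
   is a finite function I -> bool; a distribution is a weight function on
   configurations. *)
Section Defs.
Variables (R : realFieldType) (I : finType).
Notation cfg := {ffun I -> bool}.

Definition is_distribution (nu : cfg -> R) :=
  (forall x, 0 <= nu x) /\ \sum_(x : cfg) nu x = 1.

(* marginal nu_Lambda evaluated at (the restriction to Lambda of) sigma *)
Definition marg (nu : cfg -> R) (L : {set I}) (sigma : cfg) : R :=
  \sum_(tau : cfg | [forall j in L, tau j == sigma j]) nu tau.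

Definition in_supp (nu : cfg -> R) (L : {set I}) (sigma : cfg) :=
  0 < marg nu L sigma.

Definition upd (sigma : cfg) (i : I) (b : bool) : cfg :=
  [ffun j => if j == i then b else sigma j].

Definition cond (nu : cfg -> R) (L : {set I}) (sigma : cfg) (i : I) (b : bool) : R :=
  marg nu (i |: L) (upd sigma i b) / marg nu L sigma.

Definition ratio (nu : cfg -> R) (L : {set I}) (sigma : cfg) (i : I) : \bar R :=
  if cond nu L sigma i false == 0 then +oo%E
  else ((cond nu L sigma i true / cond nu L sigma i false)%:E)%E.

(* zeta-marginal stability; sigma_S is the restriction of sigma to S *)
Definition marginally_stable (zeta : R) (nu : cfg -> R) :=
  forall (i : I) (S L : {set I}) (sigma : cfg),
    S \subset L -> i \notin L -> in_supp nu L sigma ->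
    (ratio nu L sigma i <= zeta%:E)%E /\
    (ratio nu L sigma i <= zeta%:E * ratio nu S sigma i)%E.

Definition tilt (lambda : I -> R) (mu : cfg -> R) (sigma : cfg) : R :=
  mu sigma * (\prod_(i | sigma i) lambda i) /
  \sum_(tau : cfg) mu tau * (\prod_(i | tau i) lambda i).

Definition completely_marginally_stable (zeta : R) (mu : cfg -> R) :=
  forall lambda : I -> R, (forall i, 0 < lambda i <= 1) ->
    marginally_stable zeta (tilt lambda mu).
End Defs.

(* k-transformation Rd(mu,k): law of Y on [n] x [k] obtained from X ~ mu. *)
Definition kernel_block (R : realFieldType) (n k : nat) (x : {ffun 'I_n -> bool})
  (y : {ffun ('I_n * 'I_k) -> bool}) (i : 'I_n) : R :=
  if x i then (if #|[set j : 'I_k | y (i, j)]| == 1%N then k%:R^-1 else 0)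
  else (if [forall j : 'I_k, ~~ y (i, j)] then 1 else 0).

Definition Rd (R : realFieldType) (n : nat) (mu : {ffun 'I_n -> bool} -> R) (k : nat)
  (y : {ffun ('I_n * 'I_k) -> bool}) : R :=
  \sum_(x : {ffun 'I_n -> bool}) mu x * \prod_(i : 'I_n) @kernel_block R n k x y i.
Arguments Rd {R n} mu k y.

From Pilot Require Import Defs.
From mathcomp Require Import all_boot all_order all_algebra.
From mathcomp Require Import constructive_ereal.
From mathcomp Require Import ring lra.
Import Order.TTheory GRing.Theory Num.Theory.
Local Open Scope ring_scope.
Set Implicit Arguments. Unset Strict Implicit. Unset Printing Implicit Defensive.

(* The marginal of Rd(mu, k) on a pinning (L, s) is sum_x mu(x) prod_i h_i(x_i), where the
   block field h_i(b) sums the kernel of block i over the block configurations compatible with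
   the pinning.  As h_i(-1) is 0 or 1 and h_i(+1) <= 1, each h_i is, up to a positive factor,
   an external field lambda <= 1 or a pinning of x_i.  Stability of the tilted measures
   lambda * mu at the full pinning therefore gives, for the weighted partition functions
   Z_e(b) = sum_(x_i = b) mu(x) prod_(j != i) e_j(x_j), both Z_e(+) <= zeta Z_e(-) and, for
   fields f <= e, Z_f(+) Z_e(-) <= zeta Z_e(+) Z_f(-).  At a site of block i carrying no pinned
   +1, the two pinned marginals of Rd(mu, k) are Z(+)/k and h Z(+) + Z(-); comparing a pinning L
   with a sub-pinning S, each of the two terms of the latter is controlled by one of these
   inequalities, which is where the factor 2 comes from. *)

Lemma ler_sum_subpred (R : numDomainType) (T : finType) (P Q : pred T) (F : T -> R) :
  (forall x, P x -> Q x) -> (forall x, Q x -> 0 <= F x) ->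
  \sum_(x | P x) F x <= \sum_(x | Q x) F x.
Proof.
move=> PQ F_ge0; rewrite big_mkcond [leRHS]big_mkcond /=; apply: ler_sum => x _.
by case: (boolP (P x)) => [/PQ -> //|_]; case: ifP => // /F_ge0.
Qed.

Lemma sum_indicator1 (R : pzSemiRingType) (T : finType) (P : pred T) (a : T) :
  \sum_(x | P x) (x == a)%:R = (P a)%:R :> R.
Proof.
have [Pa|nPa] := boolP (P a).
  by rewrite (bigD1 a) //= eqxx big1 ?addr0 // => x /andP[_ /negbTE ->].
by rewrite big1 // => x Px; case: eqP Px nPa => // -> ->.
Qed.

Lemma two_zeta_bound (R : realFieldType) (zeta a b c d hl hs : R) :
  0 <= zeta -> 0 <= a -> 0 <= c -> 0 <= hl -> hs <= 1 ->
  a <= zeta * b -> a * d <= zeta * c * b ->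
  a * (hs * c + d) <= 2 * zeta * c * (hl * a + b).
Proof.
move=> zeta_ge0 a_ge0 c_ge0 hl_ge0 hs_le1 a_le ad_le.
have ac_ge0 : 0 <= a * c by rewrite mulr_ge0.
have : a * c * hs <= a * c by rewrite ler_piMr.
have : a * c <= zeta * b * c by rewrite ler_wpM2r.
have : 0 <= zeta * c * (hl * a) by rewrite !mulr_ge0.
nra.
Qed.

Section ExtendedRatio.
Variable R : realFieldType.
Local Open Scope ereal_scope.

Definition eratio (T F : R) : \bar R := if F == 0%R then +oo else (T / F)%:E.

Lemma eratio_le_fin (T F z : R) : (0 <= F)%R ->
  (eratio T F <= z%:E) = (0 < F)%R && (T <= z * F)%R.
Proof.
rewrite /eratio lt_def; have [->|F0] := eqVneq F 0%R; first by rewrite leye_eq.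
by move=> F_ge0 /=; rewrite F_ge0 lee_fin ler_pdivrMr // lt_def F0.
Qed.

Lemma eratio_le_mul (T1 F1 T2 F2 z : R) : (0 < z)%R -> (0 < F1)%R ->
  (0 <= T2)%R -> (0 <= F2)%R ->
  (eratio T1 F1 <= z%:E * eratio T2 F2) = (T1 * F2 <= z * T2 * F1)%R.
Proof.
move=> z_gt0 F1_gt0 T2_ge0; rewrite /eratio (gt_eqF F1_gt0) le_eqVlt.
case/predU1P=> [<-|F2_gt0].
  by rewrite eqxx gt0_muley ?lte_fin // leey mulr0 !mulr_ge0 // ltW.
by rewrite (gt_eqF F2_gt0) -EFinM lee_fin mulrA ler_pdivrMr // mulrAC ler_pdivlMr.
Qed.

End ExtendedRatio.

Section Marginals.
Variables (R : realFieldType) (I : finType).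
Implicit Types (nu : {ffun I -> bool} -> R) (S L : {set I}) (s w : {ffun I -> bool}).

Lemma upd_id s i : upd s i (s i) = s.
Proof. by apply/ffunP => j; rewrite ffunE; case: eqP => [->|]. Qed.

Lemma marg_ge0 nu L s : (forall x, 0 <= nu x) -> 0 <= marg nu L s.
Proof. by move=> nu_ge0; apply: sumr_ge0. Qed.

Lemma marg_le_subset nu S L s : (forall x, 0 <= nu x) -> S \subset L ->
  marg nu L s <= marg nu S s.
Proof.
move=> nu_ge0 /subsetP SL; apply: ler_sum_subpred => // x /forall_inP agree.
by apply/forall_inP => j /SL; apply: agree.
Qed.

Lemma marg_setT nu s : marg nu setT s = nu s.
Proof.
rewrite /marg (big_pred1 s) // => x; apply/forall_inP/eqP => [agree|-> //].
by apply/ffunP => j; apply/eqP/agree; rewrite inE.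
Qed.

Lemma margZ nu c L s : marg (fun x => nu x * c) L s = marg nu L s * c.
Proof. by rewrite /marg mulr_suml. Qed.

Lemma marg_upd_agree L s i b (x : {ffun I -> bool}) : i \notin L ->
  [forall j in i |: L, x j == upd s i b j] = (x i == b) && [forall j in L, x j == s j].
Proof.
move=> iL; apply/forall_inP/andP => [agree|[/eqP xi /forall_inP agree] j].
  split; first by have := agree i (setU11 _ _); rewrite ffunE eqxx.
  apply/forall_inP => j jL; have ji : j != i by apply: contraNneq iL => <-.
  by have := agree j; rewrite in_setU1 jL orbT ffunE (negbTE ji); apply.
rewrite in_setU1 ffunE; case: eqP => [->|_] /=; first by rewrite xi.
exact: agree.
Qed.

Lemma marg_split nu L s i : i \notin L ->
  marg nu L s = marg nu (i |: L) (upd s i true) + marg nu (i |: L) (upd s i false).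
Proof.
move=> iL; rewrite /marg (bigID (fun x : {ffun I -> bool} => x i)) /=.
by congr (_ + _); apply: eq_bigl => x; rewrite marg_upd_agree // andbC; case: (x i).
Qed.

Lemma ratioE nu L s i : marg nu L s != 0 ->
  Defs.ratio nu L s i =
  eratio (marg nu (i |: L) (upd s i true)) (marg nu (i |: L) (upd s i false)).
Proof.
move=> margL_neq0; rewrite /Defs.ratio /eratio /cond mulf_eq0 invr_eq0 (negbTE margL_neq0) orbF.
by case: eqP => // /eqP F_neq0; rewrite invf_div mulrA divfK.
Qed.

Lemma marginally_stable_scale zeta nu nu' c : 0 < c -> (forall x, nu' x = nu x * c) ->
  marginally_stable zeta nu' -> marginally_stable zeta nu.
Proof.
move=> c_gt0 nu'E stable' i S L s SL iL supp.
have margE A t : marg nu' A t = marg nu A t * c by rewrite -margZ; apply: eq_bigr.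
have divZ a b : a * c / (b * c) = a / b.
  by rewrite invfM mulrACA mulfV ?gt_eqF ?mulr1.
have ratioE' A : Defs.ratio nu' A s i = Defs.ratio nu A s i.
  by rewrite /Defs.ratio /cond !margE !divZ.
rewrite -!ratioE'; apply: stable' => //.
by rewrite /in_supp margE pmulr_lgt0.
Qed.

End Marginals.

Section FullPinning.
Variables (R : realFieldType) (I : finType) (zeta : R) (nu : {ffun I -> bool} -> R).
Hypotheses (nu_ge0 : forall x, 0 <= nu x) (stable : marginally_stable zeta nu).
Variables (i : I) (w : {ffun I -> bool}).
Hypotheses (wi : w i) (nu_w_gt0 : 0 < nu w).

Lemma marg_at_gt0 (P : {set I}) : 0 < marg nu P w.
Proof.
apply: lt_le_trans nu_w_gt0 _; rewrite -[leLHS](marg_setT nu w).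
exact: marg_le_subset (subsetT _).
Qed.

Lemma ratio_at (P : {set I}) : i \notin P ->
  Defs.ratio nu P w i = eratio (marg nu (i |: P) w) (marg nu (i |: P) (upd w i false)).
Proof.
move=> iP; rewrite ratioE ?gt_eqF ?marg_at_gt0 //.
by rewrite -{1}wi upd_id.
Qed.

Lemma stable_flip : 0 < nu (upd w i false) /\ nu w <= zeta * nu (upd w i false).
Proof.
have iL : i \notin [set~ i] by rewrite setC11.
have [+ _] := stable (subxx _) iL (marg_at_gt0 _).
by rewrite ratio_at // setUCr !marg_setT eratio_le_fin // => /andP.
Qed.

Lemma stable_flip_marg (P : {set I}) : i \notin P ->
  nu w * marg nu (i |: P) (upd w i false) <= zeta * marg nu (i |: P) w * nu (upd w i false).
Proof.
move=> iP; have iL : i \notin [set~ i] by rewrite setC11.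
have PL : P \subset [set~ i] by rewrite subsetC sub1set inE.
have [nu_w'_gt0 flip_le] := stable_flip.
have zeta_gt0 : 0 < zeta.
  by rewrite -(pmulr_lgt0 _ nu_w'_gt0); apply: lt_le_trans flip_le.
have [_] := stable PL iL (marg_at_gt0 _).
by rewrite !ratio_at // setUCr !marg_setT eratio_le_mul // marg_ge0.
Qed.

End FullPinning.

Definition tilt_weight (R : realFieldType) (I : finType) (lambda : I -> R)
  (mu : {ffun I -> bool} -> R) (x : {ffun I -> bool}) : R :=
  mu x * \prod_(j | x j) lambda j.

Lemma tilt_weight_stable (R : realFieldType) (I : finType) (zeta : R) (lambda : I -> R)
    (mu : {ffun I -> bool} -> R) w :
  (forall x, 0 <= mu x) -> completely_marginally_stable zeta mu ->
  (forall j, 0 < lambda j <= 1) -> 0 < mu w ->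
  marginally_stable zeta (tilt_weight lambda mu).
Proof.
move=> mu_ge0 cms lambda_01 mu_w_gt0.
have Lambda_gt0 (x : {ffun I -> bool}) : 0 < \prod_(j | x j) lambda j.
  by apply: prodr_gt0 => j _; case/andP: (lambda_01 j).
have N_gt0 : 0 < \sum_x tilt_weight lambda mu x.
  rewrite /tilt_weight (bigD1 w) //= ltr_wpDr ?mulr_gt0 //.
  by apply: sumr_ge0 => x _; apply: mulr_ge0 => //; apply: ltW.
apply: (marginally_stable_scale (c := (\sum_x tilt_weight lambda mu x)^-1) _ _
  (cms _ lambda_01)) => //.
by rewrite invr_gt0.
Qed.

Lemma pin_of_not_pos (R : realDomainType) (g : bool -> R) wb :
  (forall b, 0 <= g b) -> 0 < g wb -> ~~ ((0 < g true) && (0 < g false)) ->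
  forall b, g b = g wb * (b == wb)%:R.
Proof.
move=> g_ge0 g_wb_gt0 not_pos b; have [->|b_neq] := eqVneq b wb; first by rewrite mulr1.
rewrite mulr0; apply/eqP; rewrite eq_le g_ge0 andbT; apply: contraR not_pos.
by rewrite -ltNge; case: b wb b_neq g_wb_gt0 => [] [] // _ -> ->.
Qed.

Section SitePartition.
Variables (R : realFieldType) (I : finType) (mu : {ffun I -> bool} -> R) (i : I).
Implicit Types (e f : I -> bool -> R) (x w : {ffun I -> bool}).

Definition offsite_weight e x := \prod_(j | j != i) e j (x j).

Definition site_partition e b :=
  \sum_(x : {ffun I -> bool} | x i == b) mu x * offsite_weight e x.

Definition admissible e := forall j, (e j true <= e j false) || (e j false == 0).

Lemma offsite_weight_ge0 e x : (forall j b, 0 <= e j b) -> 0 <= offsite_weight e x.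
Proof. by move=> e_ge0; apply: prodr_ge0. Qed.

Lemma offsite_weight_gt0 e x j : (forall j b, 0 <= e j b) ->
  0 < offsite_weight e x -> j != i -> 0 < e j (x j).
Proof.
move=> e_ge0 E_gt0 ji; rewrite lt_def e_ge0 andbT; apply: contraTneq E_gt0 => ej0.
by rewrite /offsite_weight (bigD1 j) //= ej0 mul0r ltxx.
Qed.

Lemma offsite_weight_upd e x b : offsite_weight e (upd x i b) = offsite_weight e x.
Proof. by apply: eq_bigr => j ji; rewrite ffunE (negbTE ji). Qed.

Hypothesis mu_ge0 : forall x, 0 <= mu x.

Lemma site_partition_ge0 e b : (forall j b, 0 <= e j b) -> 0 <= site_partition e b.
Proof. by move=> e_ge0; apply: sumr_ge0 => x _; rewrite mulr_ge0 ?offsite_weight_ge0. Qed.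

Lemma site_partition_offsite e e' b : (forall j, j != i -> e j =1 e' j) ->
  site_partition e b = site_partition e' b.
Proof.
by move=> ee'; apply: eq_bigr => x _; congr (_ * _); apply: eq_bigr => j /ee'.
Qed.

Lemma sum_prod_field_split e :
  \sum_(x : {ffun I -> bool}) mu x * \prod_j e j (x j) =
  e i true * site_partition e true + e i false * site_partition e false.
Proof.
rewrite (bigID (fun x : {ffun I -> bool} => x i)) /= !mulr_sumr.
congr (_ + _); apply: eq_big => x.
- by rewrite eqb_id.
- by move=> xi; rewrite (bigD1 i) //= xi mulrCA.
- by rewrite eqbF_neg.
- by move/negbTE=> xi; rewrite (bigD1 i) //= xi mulrCA.
Qed.

Lemma site_partition_false e :
  site_partition e false =
  \sum_(x : {ffun I -> bool} | x i) mu (upd x i false) * offsite_weight e x.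
Proof.
have flipK : involutive (fun x : {ffun I -> bool} => upd x i (~~ x i)).
  by move=> x; apply/ffunP => j; rewrite !ffunE eqxx negbK; case: eqP => [->|].
rewrite /site_partition (reindex_inj (inv_inj flipK)) /=.
apply: eq_big => [x|x]; rewrite ffunE eqxx; first by case: (x i).
by rewrite offsite_weight_upd; case: (x i).
Qed.

Variable zeta : R.
Hypotheses (zeta_ge0 : 0 <= zeta) (cms : completely_marginally_stable zeta mu).

Lemma cms_flip w : w i -> mu w <= zeta * mu (upd w i false).
Proof.
move=> wi; have [->|mu_w_neq0] := eqVneq (mu w) 0; first by rewrite mulr_ge0.
have mu_w_gt0 : 0 < mu w by rewrite lt_def mu_w_neq0 mu_ge0.
have one_01 (j : I) : 0 < (1 : R) <= 1 by rewrite ltr01 lexx.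
have stable := tilt_weight_stable mu_ge0 cms one_01 mu_w_gt0.
have nuE x : tilt_weight (fun=> 1) mu x = mu x by rewrite /tilt_weight big1 ?mulr1.
have nu_ge0 x : 0 <= tilt_weight (fun=> 1) mu x by rewrite nuE.
have nu_w_gt0 : 0 < tilt_weight (fun=> 1) mu w by rewrite nuE.
by have [_] := stable_flip nu_ge0 stable wi nu_w_gt0; rewrite !nuE.
Qed.

Lemma site_partition_le e : (forall j b, 0 <= e j b) ->
  site_partition e true <= zeta * site_partition e false.
Proof.
move=> e_ge0; rewrite site_partition_false mulr_sumr /site_partition.
rewrite (eq_bigl (fun x : {ffun I -> bool} => x i)) => [|x]; last by rewrite eqb_id.
apply: ler_sum => x xi; rewrite mulrA ler_wpM2r ?offsite_weight_ge0 //.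
exact: cms_flip.
Qed.

Lemma offsite_weight_factor e w : (forall j b, 0 <= e j b) -> admissible e ->
  0 < offsite_weight e w ->
  exists (lambda : I -> R) (P : {set I}) (C : R),
    [/\ forall j, 0 < lambda j <= 1, lambda i = 1, i \notin P, 0 < C &
      forall x, offsite_weight e x =
                C * [forall j in P, x j == w j]%:R * \prod_(j | x j) lambda j].
Proof.
move=> e_ge0 e_adm E_gt0.
pose pos j := (0 < e j true) && (0 < e j false).
pose lambda j := if (j != i) && pos j then e j true / e j false else 1.
pose P := [set j | (j != i) && ~~ pos j].
pose c j := if pos j then e j false else e j (w j).
have coordE j b : j != i ->
    e j b = c j * (if j \in P then (b == w j)%:R else 1) * (if b then lambda j else 1).
  move=> ji; rewrite /c /lambda inE ji /=; case: ifP => [/andP[_ ef_gt0]|/negbT npos] /=.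
    by case: b; rewrite ?mulr1 // mulrC divfK ?gt_eqF.
  by rewrite if_same mulr1; apply: pin_of_not_pos => //; apply: offsite_weight_gt0 E_gt0 ji.
exists lambda, P, (\prod_(j | j != i) c j); split.
- move=> j; rewrite /lambda; case: ifP => [/andP[_ /andP[et_gt0 ef_gt0]]|_]; last first.
    by rewrite ltr01 lexx.
  rewrite divr_gt0 // ler_pdivrMr // mul1r.
  by have /orP[//|/eqP ef0] := e_adm j; rewrite ef0 ltxx in ef_gt0.
- by rewrite /lambda eqxx.
- by rewrite inE eqxx.
- apply: prodr_gt0 => j ji; rewrite /c; case: ifP => [/andP[] //|_].
  exact: offsite_weight_gt0 E_gt0 ji.
move=> x; rewrite /offsite_weight (eq_bigr _ (fun j ji => coordE j (x j) ji)) !big_split /=.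
congr (_ * _ * _).
  have [agree|] := boolP [forall j in P, x j == w j].
    by apply: big1 => j _; case: ifP => // /(forall_inP agree) ->.
  case/forall_inPn => j jP xj; have ji : j != i by move: jP; rewrite inE => /andP[].
  by rewrite (bigD1 j) //= jP (negbTE xj) mul0r.
by rewrite [RHS]big_mkcond [RHS](bigD1 i) //= /lambda eqxx /= if_same mul1r.
Qed.

Lemma site_partition_tilt e lambda (P : {set I}) C w : i \notin P ->
  (forall x, offsite_weight e x =
             C * [forall j in P, x j == w j]%:R * \prod_(j | x j) lambda j) ->
  forall b, site_partition e b = C * marg (tilt_weight lambda mu) (i |: P) (upd w i b).
Proof.
move=> iP E_factor b; rewrite /site_partition /marg mulr_sumr.
rewrite (eq_bigl _ _ (fun x => @marg_upd_agree _ P w i b x iP)) [RHS]big_mkcondr /=.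
apply: eq_bigr => x _; rewrite E_factor /tilt_weight.
by case: [forall j in P, _]; rewrite ?mulr1 ?mulr0 ?mul0r //; ring.
Qed.

Lemma site_partition_cross_at e w : (forall j b, 0 <= e j b) -> admissible e ->
  w i -> 0 < offsite_weight e w ->
  mu w * site_partition e false <= zeta * mu (upd w i false) * site_partition e true.
Proof.
move=> e_ge0 e_adm wi E_gt0; have [->|mu_w_neq0] := eqVneq (mu w) 0.
  by rewrite mul0r !mulr_ge0 ?site_partition_ge0.
have mu_w_gt0 : 0 < mu w by rewrite lt_def mu_w_neq0 mu_ge0.
have [lambda [P [C [lambda_01 lambda_i iP C_gt0 E_factor]]]] :=
  offsite_weight_factor e_ge0 e_adm E_gt0.
have Lambda_gt0 (x : {ffun I -> bool}) : 0 < \prod_(j | x j) lambda j.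
  by apply: prodr_gt0 => j _; case/andP: (lambda_01 j).
have Lambda_upd : \prod_(j | upd w i false j) lambda j = \prod_(j | w j) lambda j.
  rewrite big_mkcond [RHS]big_mkcond (bigD1 i) // [RHS](bigD1 i) //= ffunE eqxx wi lambda_i.
  by congr (_ * _); apply: eq_bigr => j ji; rewrite ffunE (negbTE ji).
have nu_ge0 x : 0 <= tilt_weight lambda mu x by rewrite /tilt_weight mulr_ge0 // ltW.
have := stable_flip_marg nu_ge0 (tilt_weight_stable mu_ge0 cms lambda_01 mu_w_gt0) wi
  (mulr_gt0 mu_w_gt0 (Lambda_gt0 w)) iP.
have w_upd : upd w i true = w by rewrite -[true]wi upd_id.
rewrite !(site_partition_tilt iP E_factor) w_upd /tilt_weight Lambda_upd.
set M' := marg _ _ (upd w i false); set M := marg _ _ w.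
rewrite mulrAC [leRHS](_ : _ = zeta * mu (upd w i false) * M * \prod_(j | w j) lambda j).
  rewrite ler_pM2r // => flip_le.
  by rewrite mulrCA [leRHS](_ : _ = C * (zeta * mu (upd w i false) * M)) ?ler_pM2l //; ring.
by ring.
Qed.

Lemma site_partition_cross e f : (forall j b, 0 <= e j b) -> admissible e ->
  (forall j b, 0 <= f j b <= e j b) ->
  site_partition f true * site_partition e false <=
  zeta * site_partition e true * site_partition f false.
Proof.
move=> e_ge0 e_adm f_le_e; have f_ge0 j b : 0 <= f j b by case/andP: (f_le_e j b).
have cross_at := site_partition_cross_at e_ge0 e_adm.
set Zt := site_partition e true; set Zf := site_partition e false.
rewrite (site_partition_false f) /site_partition mulr_suml mulr_sumr.
rewrite (eq_bigl (fun x : {ffun I -> bool} => x i)) => [|x]; last by rewrite eqb_id.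
apply: ler_sum => x xi; have [->|F_neq0] := eqVneq (offsite_weight f x) 0.
  by rewrite !mulr0 mul0r.
have F_gt0 : 0 < offsite_weight f x by rewrite lt_def F_neq0 offsite_weight_ge0.
have E_gt0 : 0 < offsite_weight e x.
  by apply: lt_le_trans F_gt0 _; apply: ler_prod => j _; apply: f_le_e.
have := ler_wpM2r (offsite_weight_ge0 x f_ge0) (cross_at x xi E_gt0).
rewrite -/Zt -/Zf mulrAC => /le_trans; apply.
by rewrite (mulrAC zeta) !mulrA.
Qed.

End SitePartition.

Section Blocks.
Variables (R : realFieldType) (n k : nat).
Local Notation xcfg := {ffun 'I_n -> bool}.
Local Notation ycfg := {ffun 'I_n * 'I_k -> bool}.
Local Notation zcfg := {ffun 'I_k -> bool}.
Implicit Types (S L : {set 'I_n * 'I_k}) (s y : ycfg) (z : zcfg) (i : 'I_n).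

Definition block y i : zcfg := [ffun j => y (i, j)].

Definition block_kernel (b : bool) z : R :=
  if b then (if #|[set j | z j]| == 1%N then k%:R^-1 else 0)
  else (if [forall j, ~~ z j] then 1 else 0).

Definition block_pinned L s i z := [forall j, ((i, j) \in L) ==> (z j == s (i, j))].

Definition block_field L s i b := \sum_(z | block_pinned L s i z) block_kernel b z.

Definition has_pinned_plus L s i := [exists j, ((i, j) \in L) && s (i, j)].

Definition all_minus : zcfg := [ffun=> false].

Definition one_hot (j0 : 'I_k) : zcfg := [ffun j => j == j0].

Lemma kernel_blockE (x : xcfg) y i : kernel_block R x y i = block_kernel (x i) (block y i).
Proof.
have blockE j : block y i j = y (i, j) by rewrite ffunE.
rewrite /kernel_block /block_kernel; case: (x i).
  by under [in RHS]eq_finset do rewrite blockE.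
by under [in RHS]eq_forallb do rewrite blockE.
Qed.

Lemma sum_pinned_prod_block (F : 'I_n -> zcfg -> R) L s :
  \sum_(y : ycfg | [forall p in L, y p == s p]) \prod_i F i (block y i) =
  \prod_i \sum_(z | block_pinned L s i z) F i z.
Proof.
under [RHS]eq_bigr do rewrite big_mkcond.
rewrite bigA_distr_bigA /=.
pose uncurry (f : {ffun 'I_n -> zcfg}) : ycfg := [ffun p => f p.1 p.2].
pose curry y : {ffun 'I_n -> zcfg} := [ffun i => block y i].
have uncurryK : cancel uncurry curry.
  by move=> f; apply/ffunP => i; apply/ffunP => j; rewrite !ffunE.
have curryK : cancel curry uncurry by move=> y; apply/ffunP => -[i j]; rewrite !ffunE.
rewrite (reindex uncurry) /=; last by apply: onW_bij; exists curry.
rewrite big_mkcond; apply: eq_bigr => f _.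
have blockE i : block (uncurry f) i = f i by apply/ffunP => j; rewrite !ffunE.
have [agree|] := boolP [forall p in L, uncurry f p == s p].
  apply: eq_bigr => i _; rewrite blockE ifT //; apply/forallP => j; apply/implyP => ijL.
  by have := forall_inP agree (i, j) ijL; rewrite ffunE.
case/forall_inPn => -[i j] ijL fij; rewrite (bigD1 i) //= ifF ?mul0r //.
by apply/negbTE/forallPn; exists j; rewrite ijL /=; rewrite ffunE in fij.
Qed.

Lemma marg_Rd (mu : xcfg -> R) L s :
  marg (Rd mu k) L s = \sum_(x : xcfg) mu x * \prod_i block_field L s i (x i).
Proof.
rewrite /marg /Rd exchange_big /=; apply: eq_bigr => x _; rewrite -mulr_sumr.
congr (_ * _); rewrite -sum_pinned_prod_block; apply: eq_bigr => y _.
by apply: eq_bigr => i _; rewrite kernel_blockE.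
Qed.

Lemma block_kernel_ge0 b z : 0 <= block_kernel b z.
Proof. by rewrite /block_kernel; case: b; case: ifP; rewrite ?invr_ge0 ?ler0n ?ler01. Qed.

Lemma Rd_ge0 (mu : xcfg -> R) y : (forall x, 0 <= mu x) -> 0 <= Rd mu k y.
Proof.
move=> mu_ge0; apply: sumr_ge0 => x _; rewrite mulr_ge0 // prodr_ge0 // => i _.
by rewrite kernel_blockE block_kernel_ge0.
Qed.

Lemma block_field_ge0 L s i b : 0 <= block_field L s i b.
Proof. by apply: sumr_ge0 => z _; apply: block_kernel_ge0. Qed.

Lemma block_field_anti S L s i b : S \subset L -> block_field L s i b <= block_field S s i b.
Proof.
move=> /subsetP SL; apply: ler_sum_subpred => [z /forallP pinned|z _].
  by apply/forallP => j; apply/implyP => /SL ijL; apply: (implyP (pinned j)).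
exact: block_kernel_ge0.
Qed.

Lemma has_pinned_plus_subset S L s i : S \subset L ->
  has_pinned_plus S s i -> has_pinned_plus L s i.
Proof.
move=> /subsetP SL /existsP[j /andP[ijS sij]].
by apply/existsP; exists j; rewrite SL.
Qed.

Lemma sum_block_kernel_false (P : pred zcfg) :
  \sum_(z | P z) block_kernel false z = (P all_minus)%:R.
Proof.
have minusE z : [forall j, ~~ z j] = (z == all_minus).
  apply/forallP/eqP => [minus|-> j]; last by rewrite ffunE.
  by apply/ffunP => j; rewrite ffunE; apply/negbTE.
rewrite -sum_indicator1; apply: eq_bigr => z _.
by rewrite /block_kernel minusE; case: eqP.
Qed.

Lemma block_pinned_all_minus L s i : block_pinned L s i all_minus = ~~ has_pinned_plus L s i.
Proof.
rewrite negb_exists; apply: eq_forallb => j; rewrite ffunE negb_and.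
by case: ((i, j) \in L); case: (s (i, j)).
Qed.

Lemma block_field_false L s i : block_field L s i false = (~~ has_pinned_plus L s i)%:R.
Proof. by rewrite /block_field sum_block_kernel_false block_pinned_all_minus. Qed.

Lemma one_hotP z : reflect (exists j0, z = one_hot j0) (#|[set j | z j]| == 1%N).
Proof.
apply: (iffP cards1P) => -[j0 zE]; exists j0.
  by apply/ffunP => j; rewrite ffunE -[z j](in_set (fun j => z j)) zE inE.
by apply/setP => j; rewrite zE !inE ffunE.
Qed.

Lemma block_field_true_le1 L s i : block_field L s i true <= 1.
Proof.
apply: le_trans (ler_sum_subpred (Q := predT) _ _) _ => // [z _|]; first exact: block_kernel_ge0.
rewrite /block_kernel -big_mkcond /= sumr_const.
have card_le : (#|[pred z : zcfg | #|[set j | z j]| == 1%N]| <= k)%N.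
  rewrite -[k in (_ <= k)%N]card_ord; apply: leq_trans (leq_imset_card one_hot _).
  by apply/subset_leq_card/subsetP => z /one_hotP[j0 ->]; apply: imset_f.
have [->|k_gt0] := posnP k; first by rewrite invr0 mul0rn ler01.
have kR_neq0 : k%:R != 0 :> R by rewrite pnatr_eq0 -lt0n.
apply: le_trans (ler_wpMn2l _ card_le) _; first by rewrite invr_ge0 ler0n.
by rewrite -(mulr_natr k%:R^-1) mulVf.
Qed.

Lemma block_field_admissible L s : admissible (block_field L s).
Proof.
move=> i; rewrite block_field_false; case: (has_pinned_plus L s i) => /=.
  by rewrite eqxx orbT.
by rewrite block_field_true_le1.
Qed.

Variables (i0 : 'I_n) (j0 : 'I_k).
Local Notation s0 := (i0, j0).

Lemma block_pinned_other L s b i z : i != i0 ->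
  block_pinned (s0 |: L) (upd s s0 b) i z = block_pinned L s i z.
Proof.
move=> i_neq; apply: eq_forallb => j.
by rewrite in_setU1 ffunE xpair_eqE (negbTE i_neq).
Qed.

Lemma block_pinned_site L s b z : s0 \notin L ->
  block_pinned (s0 |: L) (upd s s0 b) i0 z = (z j0 == b) && block_pinned L s i0 z.
Proof.
move=> s0L; apply/forallP/andP => [pinned|[/eqP zb /forallP pinned] j].
  split; first by have := implyP (pinned j0); rewrite setU11 ffunE eqxx; apply.
  apply/forallP => j; apply/implyP => ijL; have j_neq : (i0, j) != s0.
    by apply: contraNneq s0L => <-.
  by have := implyP (pinned j); rewrite in_setU1 ijL orbT ffunE (negbTE j_neq); apply.
rewrite in_setU1 ffunE; case: eqP => [[->]|_] /=; first by rewrite zb.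
exact: pinned.
Qed.

Lemma has_pinned_plus_site L s b : s0 \notin L ->
  has_pinned_plus (s0 |: L) (upd s s0 b) i0 = b || has_pinned_plus L s i0.
Proof.
move=> s0L; apply/existsP/orP => [[j]|[->|/existsP[j /andP[ijL sj]]]].
- rewrite in_setU1 ffunE; case: eqP => [_ /= -> //|_ /= plus]; first by left.
  by right; apply/existsP; exists j.
- by exists j0; rewrite setU11 ffunE eqxx.
have j_neq : (i0, j) != s0 by apply: contraNneq s0L => <-.
by exists j; rewrite in_setU1 ijL orbT ffunE (negbTE j_neq).
Qed.

Lemma block_pinned_one_hot L s : s0 \notin L ->
  block_pinned L s i0 (one_hot j0) = ~~ has_pinned_plus L s i0.
Proof.
move=> s0L; rewrite negb_exists; apply: eq_forallb => j; rewrite ffunE negb_and.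
have [->|_] := eqVneq j j0; first by rewrite (negbTE s0L).
by case: ((i0, j) \in L); case: (s (i0, j)).
Qed.

Lemma sum_block_kernel_true_at (P : pred zcfg) :
  \sum_(z : zcfg | (z j0 == true) && P z) block_kernel true z = (P (one_hot j0))%:R / k%:R.
Proof.
have -> : P (one_hot j0) = (one_hot j0 j0 == true) && P (one_hot j0) by rewrite ffunE eqxx.
rewrite -(sum_indicator1 _ (fun z : zcfg => (z j0 == true) && P z)) mulr_suml.
apply: eq_bigr => z /andP[/eqP zj0 _].
rewrite /block_kernel; case: (one_hotP z) => [[j zE]|not_one_hot].
  by move: zj0; rewrite zE ffunE => /eqP <-; rewrite eqxx mul1r.
by case: eqP => [zE|]; [case: not_one_hot; exists j0 | rewrite mul0r].
Qed.

Lemma block_field_site_true L s : s0 \notin L ->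
  block_field (s0 |: L) (upd s s0 true) i0 true = (~~ has_pinned_plus L s i0)%:R / k%:R.
Proof.
move=> s0L; rewrite /block_field; under eq_bigl do rewrite block_pinned_site //.
by rewrite sum_block_kernel_true_at block_pinned_one_hot.
Qed.

Lemma block_field_site_false L s b : s0 \notin L ->
  block_field (s0 |: L) (upd s s0 b) i0 false = (~~ (b || has_pinned_plus L s i0))%:R.
Proof. by move=> s0L; rewrite block_field_false has_pinned_plus_site. Qed.

Lemma marg_Rd_site (mu : xcfg -> R) L s b : s0 \notin L ->
  marg (Rd mu k) (s0 |: L) (upd s s0 b) =
  block_field (s0 |: L) (upd s s0 b) i0 true * site_partition mu i0 (block_field L s) true +
  block_field (s0 |: L) (upd s s0 b) i0 false * site_partition mu i0 (block_field L s) false.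
Proof.
move=> s0L; rewrite marg_Rd (sum_prod_field_split _ i0).
by congr (_ * _ + _ * _); apply: site_partition_offsite => i i_neq b';
  apply: eq_bigl => z; apply: block_pinned_other.
Qed.

End Blocks.

Arguments block_field {R n k} L s i b.

Section RdStability.
Variables (R : realFieldType) (n k : nat) (zeta : R) (mu : {ffun 'I_n -> bool} -> R).
Hypotheses (mu_ge0 : forall x, 0 <= mu x) (zeta_ge0 : 0 <= zeta).
Hypothesis cms : completely_marginally_stable zeta mu.
Variables (i0 : 'I_n) (j0 : 'I_k).
Local Notation s0 := (i0, j0).
Local Notation pinned_marg A s b := (marg (Rd mu k) (s0 |: A) (upd s s0 b)).
Local Notation Z A s b := (site_partition mu i0 (block_field A s) b).
Implicit Types (S L A : {set 'I_n * 'I_k}) (s : {ffun 'I_n * 'I_k -> bool}).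

Lemma Rd_site_true A s : s0 \notin A ->
  pinned_marg A s true = (~~ has_pinned_plus A s i0)%:R / k%:R * Z A s true.
Proof.
move=> s0A; rewrite marg_Rd_site // block_field_site_true //.
by rewrite block_field_site_false // mul0r addr0.
Qed.

Lemma Rd_site_false A s : s0 \notin A ->
  pinned_marg A s false = block_field (s0 |: A) (upd s s0 false) i0 true * Z A s true +
                          (~~ has_pinned_plus A s i0)%:R * Z A s false.
Proof. by move=> s0A; rewrite marg_Rd_site // block_field_site_false. Qed.

Lemma Rd_flip_le A s : s0 \notin A -> pinned_marg A s true <= zeta * pinned_marg A s false.
Proof.
move=> s0A; rewrite Rd_site_true // Rd_site_false //.
have field_ge0 := @block_field_ge0 R n k.
have Zt_ge0 := site_partition_ge0 i0 mu_ge0 true (field_ge0 A s).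
have Zf_ge0 := site_partition_ge0 i0 mu_ge0 false (field_ge0 A s).
have h_ge0 := field_ge0 (s0 |: A) (upd s s0 false) i0 true.
case: (has_pinned_plus A s i0) => /=; first by rewrite !mul0r addr0 !mulr_ge0.
have k_gt0 : (0 < k)%N := leq_ltn_trans (leq0n j0) (ltn_ord j0).
have Zt_le := site_partition_le i0 mu_ge0 zeta_ge0 cms (field_ge0 A s).
rewrite !mul1r; apply: le_trans (ler_piMl Zt_ge0 _) _; first by rewrite invf_le1 ?ltr0n // ler1n.
by apply: le_trans Zt_le _; rewrite ler_wpM2l // lerDr mulr_ge0.
Qed.

Lemma Rd_pinned_false_gt0 A s : s0 \notin A -> 0 < marg (Rd mu k) A s ->
  0 < pinned_marg A s false.
Proof.
move=> s0A supp; rewrite lt_def marg_ge0 ?andbT; last by move=> y; apply: Rd_ge0.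
apply: contraTneq supp => F0; rewrite (marg_split _ s s0A) F0 addr0 -leNgt.
by have := Rd_flip_le s s0A; rewrite F0 mulr0.
Qed.

Lemma Rd_flip_cross S L s : S \subset L -> s0 \notin L ->
  pinned_marg L s true * pinned_marg S s false <=
  2 * zeta * pinned_marg S s true * pinned_marg L s false.
Proof.
move=> SL s0L; have s0S : s0 \notin S := contra (subsetP SL _) s0L.
have Rd_nonneg y : 0 <= Rd mu k y by apply: Rd_ge0.
rewrite Rd_site_true //; case pL: (has_pinned_plus L s i0) => /=.
  by rewrite !mul0r !mulr_ge0 ?marg_ge0.
have pS : has_pinned_plus S s i0 = false.
  by apply: contraFF pL; apply: has_pinned_plus_subset.
have field_ge0 := @block_field_ge0 R n k.
have adm := @block_field_admissible R n k.
have field_le j b : 0 <= block_field (R := R) L s j b <= block_field S s j b.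
  by apply/andP; split; [apply: field_ge0 | apply: block_field_anti].
rewrite Rd_site_true // Rd_site_false // Rd_site_false // pS pL /= !mul1r.
set a := Z L s true; set b := Z L s false; set c := Z S s true; set d := Z S s false.
set hS := block_field (s0 |: S) _ _ true; set hL := block_field (s0 |: L) _ _ true.
have bound : a * (hS * c + d) <= 2 * zeta * c * (hL * a + b).
  apply: two_zeta_bound; rewrite ?field_ge0 ?block_field_true_le1 //.
  - exact: site_partition_ge0.
  - exact: site_partition_ge0.
  - exact: site_partition_le.
  exact: site_partition_cross.
rewrite -[leLHS]mulrA [leRHS](_ : _ = k%:R^-1 * (2 * zeta * c * (hL * a + b))); last by ring.
by rewrite ler_wpM2l ?invr_ge0 ?ler0n.
Qed.

End RdStability.

Unset Implicit Arguments.
Set Strict Implicit.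

Theorem lemma6p3 (R : realFieldType) (n : nat) (zeta : R)
  (mu : {ffun 'I_n -> bool} -> R) :
  1 < zeta ->
  is_distribution mu ->
  completely_marginally_stable zeta mu ->
  forall k : nat, (1 <= k)%N ->
    marginally_stable (2 * zeta) (Rd mu k).
Proof.
(* [1 <= k] is implied by the existence of the site [(i0, j0)]. *)
move=> zeta_gt1 [mu_ge0 _] cms k _ [i0 j0] S L s SL s0L supp.
have zeta_gt0 : 0 < zeta := lt_trans ltr01 zeta_gt1.
have zeta_ge0 := ltW zeta_gt0.
have Rd_nonneg y : 0 <= Rd mu k y by apply: Rd_ge0.
have margRd_ge0 A t : 0 <= marg (Rd mu k) A t := marg_ge0 A t Rd_nonneg.
have s0S : (i0, j0) \notin S := contra (subsetP SL _) s0L.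
have suppS := lt_le_trans supp (marg_le_subset s Rd_nonneg SL).
have F_gt0 := Rd_pinned_false_gt0 mu_ge0 zeta_ge0 cms.
rewrite !ratioE ?gt_eqF //; split.
  rewrite eratio_le_fin // F_gt0 //=; apply: le_trans (Rd_flip_le mu_ge0 zeta_ge0 cms s s0L) _.
  by rewrite ler_wpM2r // ler_peMl // ler1n.
rewrite eratio_le_mul ?F_gt0 ?mulr_gt0 //.
exact: Rd_flip_cross.
Qed.
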